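(* Let $Y$ be an Abelian group, let $\varphi_1,\dots,\varphi_m$ and $\psi_1,\dots,\psi_n$ be functions on $Y$, let $a_1,\dots,a_m,b_1,\dots,b_m,c_1,\dots,c_n,d_1,\dots,d_n$ be integers, and let $q(u,v)$ be a continuous polynomial of degree $l$ on $Y^2$, such that $$\sum_{j=1}^m\varphi_j(a_ju+b_jv)=\sum_{j=1}^n\psi_j(c_ju+d_jv)+q(u,v),\quad u,v\in Y.$$ Then for each $j\in\{1,\dots,m\}$, for all $u,v,h,k,k_1,\dots,k_n\in Y$ and all $l_i\in Y$ ($i\in\{1,\dots,m\}\setminus\{j\}$), $$\Big[\Delta_{a_jh+b_jk}^{l+1}\prod_{i\in\{1,\dots,m\},\,i\neq j}\Delta_{(a_jb_i-b_ja_i)l_i}\prod_{s=1}^n\Delta_{(a_jd_s-b_jc_s)k_s}\varphi_j\Big](a_ju+b_jv)=0,$$ where the product denotes composition of the (commuting) difference operators. Moreover, if $q\equiv 0$, the same holds with the operator $\Delta_{a_jh+b_jk}^{l+1}$ omitted.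
   Context: For a function $f$ on an Abelian group $G$ and $h\in G$, $\Delta_hf(y)=f(y+h)-f(y)$. A function $f$ on $G$ is a polynomial if $\Delta_h^{l+1}f(y)=0$ for some $l$ and all $y,h\in G$; the minimal such $l$ is its degree. *)

From HB Require Import structures.
From mathcomp Require Import all_boot all_order all_algebra.
From mathcomp Require Import all_classical all_reals all_analysis.
Set Implicit Arguments. Unset Strict Implicit. Unset Printing Implicit Defensive.
Import Order.TTheory GRing.Theory Num.Theory.
Local Open Scope ring_scope.

Definition delta {G V : zmodType} (h : G) (f : G -> V) : G -> V :=
  fun y => f (y + h) - f y.

Definition delta_seq {G V : zmodType} (hs : seq G) (f : G -> V) : G -> V :=
  foldr delta f hs.

Definition is_poly_of_degree {G V : zmodType} (f : G -> V) (l : nat) : Prop :=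
  (forall y h : G, iter l.+1 (delta h) f y = 0) /\
  (forall l' : nat, (forall y h : G, iter l'.+1 (delta h) f y = 0) -> (l <= l')%N).

From HB Require Import structures.
From mathcomp Require Import all_boot all_order all_algebra.
From mathcomp Require Import all_classical all_reals all_analysis.
Import Order.TTheory GRing.Theory Num.Theory.
Import numFieldNormedType.Exports.
Set Implicit Arguments. Unset Strict Implicit. Unset Printing Implicit Defensive.
Local Open Scope ring_scope.

(* Regard the equation as an identity between functions of w = (u, v) in Y^2
   and apply to it difference operators in Y^2.  The term phi_i(a_i u + b_i v)
   is annihilated by a step in the kernel of (u, v) |-> a_i u + b_i v, e.g.
   (l_i b_i, -l_i a_i); similarly (k_s d_s, -k_s c_s) kills the psi_s term, and
   l+1 steps (h, k) kill q.  Only the phi_j term survives, and on it a step w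
   acts as the shift by a_j w_1 + b_j w_2, which turns the steps above into
   (a_j b_i - b_j a_i) l_i, (a_j d_s - b_j c_s) k_s and a_j h + b_j k. *)

Section DifferenceOperators.
Variables (G V : zmodType).
Implicit Types (f g : G -> V) (x : G) (ws : seq G).

Lemma deltaC x y f : delta x (delta y f) = delta y (delta x f).
Proof.
apply: funext => z; rewrite /delta (addrAC z x y).
by rewrite !opprB !addrA [RHS]addrAC [LHS]addrAC (addrAC (f (z + y + x))).
Qed.

Lemma delta_delta_seq x ws f :
  delta x (delta_seq ws f) = delta_seq ws (delta x f).
Proof. by elim: ws => //= y ws IH; rewrite deltaC IH. Qed.

Lemma delta_seqC ws ws' f :
  delta_seq ws (delta_seq ws' f) = delta_seq ws' (delta_seq ws f).
Proof. by elim: ws => //= x ws IH; rewrite IH delta_delta_seq. Qed.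

Lemma delta_seq_cat ws ws' f :
  delta_seq (ws ++ ws') f = delta_seq ws (delta_seq ws' f).
Proof. by rewrite /delta_seq foldr_cat. Qed.

Lemma iter_delta k x f : iter k (delta x) f = delta_seq (nseq k x) f.
Proof. by elim: k => //= k ->. Qed.

Lemma delta_seq0 ws : delta_seq ws (fun _ : G => 0 : V) = (fun _ => 0).
Proof.
elim: ws => //= x ws ->.
by apply: funext => z; rewrite /delta subrr.
Qed.

Lemma delta_seq_eq0 ws x f :
  x \in ws -> delta x f = (fun _ => 0) -> delta_seq ws f = (fun _ => 0).
Proof.
move=> + fx0; elim: ws => //= y ws IH; rewrite in_cons => /orP[/eqP <-|/IH ->].
  by rewrite delta_delta_seq fx0 delta_seq0.
exact: (delta_seq0 [:: y]).
Qed.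

Lemma delta_seqD ws f g :
  delta_seq ws (fun y => f y + g y) =
  (fun y => delta_seq ws f y + delta_seq ws g y).
Proof.
elim: ws => //= x ws ->.
by apply: funext => z; rewrite /delta opprD addrACA.
Qed.

Lemma delta_seq_sum (I : Type) (r : seq I) (F : I -> G -> V) ws :
  delta_seq ws (fun y => \sum_(i <- r) F i y) =
  (fun y => \sum_(i <- r) delta_seq ws (F i) y).
Proof.
elim: ws => //= x ws ->.
by apply: funext => z; rewrite /delta -sumrB.
Qed.

Variables (H : zmodType) (L : G -> H).
Hypothesis L_additive : {morph L : x y / x + y}.

Lemma delta_seq_comp (f : H -> V) ws :
  delta_seq ws (f \o L) = delta_seq (map L ws) f \o L.
Proof.
elim: ws => //= x ws ->.
by apply: funext => z; rewrite /delta /= L_additive.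
Qed.

Lemma delta_seq_comp_eq0 (f : H -> V) ws x :
  x \in ws -> L x = 0 -> delta_seq ws (f \o L) = (fun _ => 0).
Proof.
move=> x_ws Lx0; apply: delta_seq_eq0 x_ws _.
by apply: funext => z; rewrite /delta /= L_additive Lx0 addr0 subrr.
Qed.

End DifferenceOperators.

Section LinearForms.
Variable Y : zmodType.

Definition linform (x y : int) (w : Y * Y) : Y := w.1 *~ x + w.2 *~ y.

Definition kernel_step (x y : int) (t : Y) : Y * Y := (t *~ y, - (t *~ x)).

Lemma linformD x y : {morph linform x y : w w' / w + w'}.
Proof. by move=> w w'; rewrite /linform /= !mulrzDl addrACA. Qed.

Lemma linform_kernel_step x y x' y' t :
  linform x y (kernel_step x' y' t) = t *~ (x * y' - y * x').
Proof.
by rewrite /linform /= mulNrz -!mulrzA mulrzBr (mulrC y') (mulrC x').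
Qed.

Lemma linform_kernel_step_eq0 x y t : linform x y (kernel_step x y t) = 0.
Proof. by rewrite linform_kernel_step (mulrC x) subrr mulr0z. Qed.

End LinearForms.

Section FunctionalEquation.
Variables (Y C : zmodType) (m n : nat).
Variables (phi : 'I_m -> Y -> C) (psi : 'I_n -> Y -> C).
Variables (a b : 'I_m -> int) (c d : 'I_n -> int) (q : Y * Y -> C).
Hypothesis feq : forall u v : Y,
  \sum_(j < m) phi j (u *~ a j + v *~ b j)
  = \sum_(j < n) psi j (u *~ c j + v *~ d j) + q (u, v).

Section FixedIndex.
Variables (j : 'I_m) (ls : 'I_m -> Y) (ks : 'I_n -> Y).

Definition separating_steps : seq (Y * Y) :=
  [seq kernel_step (a i) (b i) (ls i) | i <- enum 'I_m & i != j] ++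
  [seq kernel_step (c s) (d s) (ks s) | s <- enum 'I_n].

Lemma map_linform_separating_steps :
  map (linform (a j) (b j)) separating_steps =
  [seq ls i *~ (a j * b i - b j * a i) | i <- enum 'I_m & i != j] ++
  [seq ks s *~ (a j * d s - b j * c s) | s <- enum 'I_n].
Proof.
rewrite map_cat -!map_comp; congr (_ ++ _); apply: eq_map => ? /=;
  exact: linform_kernel_step.
Qed.

Lemma delta_seq_separating_psi :
  delta_seq separating_steps
    (fun w => \sum_(s < n) psi s (linform (c s) (d s) w)) = (fun _ => 0).
Proof.
rewrite delta_seq_sum; apply: funext => w; apply: big1 => s _.
rewrite (delta_seq_comp_eq0 (linformD (c s) (d s)) _
          (x := kernel_step (c s) (d s) (ks s))) ?linform_kernel_step_eq0 //.
by rewrite mem_cat (map_f (fun s => kernel_step (c s) (d s) (ks s))) ?orbT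
  ?mem_enum.
Qed.

Lemma delta_seq_separating_phi :
  delta_seq separating_steps
    (fun w => \sum_(i < m) phi i (linform (a i) (b i) w)) =
  delta_seq separating_steps (phi j \o linform (a j) (b j)).
Proof.
rewrite delta_seq_sum; apply: funext => w; rewrite (bigD1 j) //= big1 ?addr0 //.
move=> i ij.
rewrite (delta_seq_comp_eq0 (linformD (a i) (b i)) _
          (x := kernel_step (a i) (b i) (ls i))) ?linform_kernel_step_eq0 //.
by rewrite mem_cat (map_f (fun i => kernel_step (a i) (b i) (ls i))) //=
  mem_filter ij mem_enum.
Qed.

Lemma delta_seq_phi_eq0 (steps : seq (Y * Y)) :
  delta_seq steps q = (fun _ => 0) -> forall u v,
  delta_seq (map (linform (a j) (b j)) steps)
    (delta_seq [seq ls i *~ (a j * b i - b j * a i) | i <- enum 'I_m & i != j]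
      (delta_seq [seq ks s *~ (a j * d s - b j * c s) | s <- enum 'I_n]
        (phi j)))
    (u *~ a j + v *~ b j) = 0.
Proof.
move=> steps_q u v.
have feq_fun : (fun w => \sum_(i < m) phi i (linform (a i) (b i) w)) =
               (fun w => \sum_(s < n) psi s (linform (c s) (d s) w) + q w).
  by apply: funext => -[u' v']; exact: feq.
have := congr1 (fun F => delta_seq (steps ++ separating_steps) F (u, v))
  feq_fun.
rewrite /= delta_seqD !(delta_seq_cat steps) delta_seq_separating_phi.
rewrite delta_seq_separating_psi (delta_seqC steps _ q) steps_q.
rewrite !delta_seq0 addr0.
rewrite -delta_seq_cat (delta_seq_comp (linformD (a j) (b j))) map_cat.
rewrite map_linform_separating_steps.
by rewrite (delta_seq_cat (map _ steps)) delta_seq_cat.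
Qed.

End FixedIndex.
End FunctionalEquation.

Theorem lemma4 (Y : topologicalZmodType) (C : numFieldType) (m n l : nat)
  (phi : 'I_m -> Y -> C) (psi : 'I_n -> Y -> C)
  (a b : 'I_m -> int) (c d : 'I_n -> int) (q : Y * Y -> C) :
  continuous q ->
  is_poly_of_degree q l ->
  (forall u v : Y,
     \sum_(j < m) phi j (u *~ a j + v *~ b j)
     = \sum_(j < n) psi j (u *~ c j + v *~ d j) + q (u, v)) ->
  (forall (j : 'I_m) (u v h k : Y) (ls : 'I_m -> Y) (ks : 'I_n -> Y),
     iter l.+1 (delta (h *~ a j + k *~ b j))
       (delta_seq [seq ls i *~ (a j * b i - b j * a i) | i <- enum 'I_m & i != j]
         (delta_seq [seq ks s *~ (a j * d s - b j * c s) | s <- enum 'I_n]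
            (phi j)))
       (u *~ a j + v *~ b j) = 0)
  /\
  ((forall w, q w = 0) ->
   forall (j : 'I_m) (u v : Y) (ls : 'I_m -> Y) (ks : 'I_n -> Y),
     delta_seq [seq ls i *~ (a j * b i - b j * a i) | i <- enum 'I_m & i != j]
       (delta_seq [seq ks s *~ (a j * d s - b j * c s) | s <- enum 'I_n]
          (phi j))
       (u *~ a j + v *~ b j) = 0).
Proof.
move=> _ [q_poly _] feq; split.
  move=> j u v h k ls ks.
  have steps_q : delta_seq (nseq l.+1 (h, k)) q = (fun _ => 0).
    by rewrite -iter_delta; apply: funext => w; exact: q_poly.
  have := delta_seq_phi_eq0 feq j ls ks steps_q u v.
  by rewrite map_nseq -iter_delta.
move=> q0 j u v ls ks.
by apply: (delta_seq_phi_eq0 feq j ls ks (steps := [::])) => //; apply: funext.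
Qed.
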